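(* Let $\Bbbk$ be an algebraically closed field of characteristic zero and $H$ the $\Bbbk$-algebra generated by $b,c,z$ with relations $b^2=c^2=1$, $bc=cb$, $zb=-bz$, $zc=-cz$, $z^2=0$. Let $e_0=\frac14(1+b)(1+c)$, $e_1=\frac14(1+b)(1-c)$, $e_2=\frac14(1-b)(1+c)$, $e_3=\frac14(1-b)(1-c)$, and let $\tau$ be the permutation of $\{0,1,2,3\}$ with $\tau(0)=3,\tau(1)=2,\tau(2)=1,\tau(3)=0$. Then for $i\in\{0,1,2,3\}$ and $k\in\{0,1,2,3\}\setminus\{i,\tau(i)\}$, the ideals $(e_i+e_{\tau(i)})$, $(z+e_i+e_{\tau(i)})$, $(ze_k+e_i+e_{\tau(i)})$ and $(ze_{\tau(k)}+e_i+e_{\tau(i)})$ are pairwise distinct.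
   Context: $(a)$ denotes the two-sided ideal of $H$ generated by $a$. *)

From HB Require Import structures.
From mathcomp Require Import all_boot all_order all_algebra.
Set Implicit Arguments. Unset Strict Implicit. Unset Printing Implicit Defensive.
Import Order.TTheory GRing.Theory Num.Theory.
Local Open Scope ring_scope.

Definition H_rels (k : fieldType) (A : algType k) (b c z : A) : Prop :=
  [/\ b * b = 1, c * c = 1, b * c = c * b &
      [/\ z * b = - (b * z), z * c = - (c * z) & z * z = 0]].

Definition alg_generated_by (k : fieldType) (A : algType k) (b c z : A) : Prop :=
  forall S : A -> Prop,
    S 1 -> S b -> S c -> S z ->
    (forall x y, S x -> S y -> S (x + y)) ->
    (forall (a : k) x, S x -> S (a *: x)) ->
    (forall x y, S x -> S y -> S (x * y)) ->
    forall x, S x.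

Definition H_universal (k : fieldType) (A : algType k) (b c z : A) : Prop :=
  forall (B : algType k) (b' c' z' : B), H_rels b' c' z' ->
    exists f : A -> B,
      [/\ (forall x y, f (x + y) = f x + f y),
          (forall (a : k) x, f (a *: x) = a *: f x),
          (forall x y, f (x * y) = f x * f y),
          f 1 = 1 & [/\ f b = b', f c = c' & f z = z']].

(* A (together with b, c, z) is a presentation of the algebra
   k<b,c,z | b^2=c^2=1, bc=cb, zb=-bz, zc=-cz, z^2=0>. *)
Definition is_H (k : fieldType) (A : algType k) (b c z : A) : Prop :=
  [/\ H_rels b c z, alg_generated_by b c z & H_universal b c z].

Definition e_idem (k : fieldType) (A : algType k) (b c : A) (i : 'I_4) : A :=
  let sb : A := if (val i < 2)%N then 1 else -1 in
  let sc : A := if ~~ odd (val i) then 1 else -1 in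
  (4%:R : k)^-1 *: ((1 + sb * b) * (1 + sc * c)).

Definition tau (i : 'I_4) : 'I_4 := rev_ord i.

Definition ideal_gen (k : fieldType) (A : algType k) (a : A) : A -> Prop :=
  fun h => exists (n : nat) (xs ys : 'I_n -> A), h = \sum_(j < n) xs j * a * ys j.

From mathcomp Require Import all_boot all_order all_algebra all_field.
Import GRing.Theory.
Local Open Scope ring_scope.
Set Implicit Arguments. Unset Strict Implicit. Unset Printing Implicit Defensive.

(* Each pair of ideals is separated by an algebra map f : H -> M_2(k) killing
   the generator of one ideal but not the other; f then vanishes on that whole
   ideal.  With D = E_11 - E_22, the assignment b |-> +-D, c |-> +-D, z |-> E_12
   (signs those of e_j) satisfies the relations of H and sends e_j to E_11,
   e_(tau j) to E_22 and the two other idempotents to 0.  For j = kk it kills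
   e_i + e_(tau i) and z e_kk but not z or z e_(tau kk); for j = tau kk the roles
   of z e_kk and z e_(tau kk) are swapped. *)

Lemma ideal_gen_id (k : fieldType) (A : algType k) (a : A) : ideal_gen a a.
Proof. by exists 1%N, (fun=> 1), (fun=> 1); rewrite big_ord1 mul1r mulr1. Qed.

Section AlgebraMorphism.

Variables (k : fieldType) (A B : algType k) (f : A -> B).
Hypotheses (fD : {morph f : x y / x + y}) (fM : {morph f : x y / x * y}).

Lemma ideal_gen_kernel (a x : A) : f a = 0 -> ideal_gen a x -> f x = 0.
Proof.
move=> fa [n [xs [ys ->]]].
have f0 : f 0 = 0 by apply: (addrI (f 0)); rewrite -fD !addr0.
by rewrite (big_morph f fD f0) big1 // => j _; rewrite !fM fa mulr0 mul0r.
Qed.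

Lemma ideal_gen_neq (a a' : A) :
  f a = 0 -> f a' != 0 -> ideal_gen a <> ideal_gen a'.
Proof.
move=> fa /eqP fa' Ea; apply: fa'; apply: (ideal_gen_kernel fa).
by rewrite Ea; apply: ideal_gen_id.
Qed.

Hypotheses (fZ : forall (a : k) x, f (a *: x) = a *: f x) (f1 : f 1 = 1).

Lemma e_idem_morph (b c : A) l : f (e_idem b c l) = e_idem (f b) (f c) l.
Proof.
have fN1 : f (-1) = -1 by rewrite -scaleN1r fZ f1 scaleN1r.
by rewrite /e_idem fZ fM !fD !fM f1; case: ifP; case: ifP; rewrite ?fN1 ?f1.
Qed.

End AlgebraMorphism.

Lemma e_idemE (k : fieldType) (A : algType k) (b c : A) l :
  e_idem b c l =
  (4%:R : k)^-1 *: ((1 + (-1) ^+ (2 <= l)%N * b) * (1 + (-1) ^+ odd l * c)).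
Proof. by rewrite /e_idem ltnNge; case: (2 <= l)%N; case: odd. Qed.

Lemma tauK : involutive tau.
Proof. exact: rev_ordK. Qed.

Lemma tau_eq (i j : 'I_4) : (tau i == j) = (i == tau j).
Proof. by rewrite -{1}(tauK j) (inj_eq rev_ord_inj). Qed.

Lemma tau_neq (j : 'I_4) : tau j != j.
Proof. by case: j => -[|[|[|[|?]]]]. Qed.

Section Representation.

Variables (k : fieldType) (A : algType k) (P Q N : A).
Hypotheses (PQ1 : P + Q = 1) (PP : P * P = P) (NP : N * P = 0) (PN : P * N = N).

Lemma compl_idemE : Q = 1 - P.
Proof. by rewrite -PQ1 addrAC subrr add0r. Qed.

Lemma compl_idem_orth : P * Q = 0 /\ Q * P = 0.
Proof. by rewrite compl_idemE mulrBl mulrBr mulr1 mul1r PP subrr. Qed.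

Lemma compl_idem_sq : Q * Q = Q.
Proof.
by have [PQ _] := compl_idem_orth; rewrite {1}compl_idemE mulrBl mul1r PQ subr0.
Qed.

Lemma nil_sq : N * N = 0.
Proof. by rewrite -{2}PN mulrA NP mul0r. Qed.

Lemma invol_sq : (P - Q) * (P - Q) = 1.
Proof.
have [PQ QP] := compl_idem_orth.
by rewrite mulrBl !mulrBr PP PQ QP compl_idem_sq subr0 sub0r opprK.
Qed.

Lemma nil_compl : N * Q = N.
Proof. by rewrite compl_idemE mulrBr mulr1 NP subr0. Qed.

Lemma nil_invol : N * (P - Q) = - N /\ (P - Q) * N = N.
Proof.
by rewrite compl_idemE !mulrBl !mulrBr NP PN mulr1 mul1r subrr !subr0 sub0r.
Qed.

Lemma one_add_signD (x : bool) :
  1 + (-1) ^+ x * (P - Q) = (if x then Q else P) *+ 2.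
Proof.
rewrite mulr_sign -PQ1 mulr2n; case: x.
- by rewrite opprB (addrC P) addrACA subrr addr0.
- by rewrite addrACA subrr addr0.
Qed.

Lemma sign_proj_mul (x y : bool) :
  (if x then Q else P) * (if y then Q else P) =
  if x == y then (if x then Q else P) else 0.
Proof.
have [PQ QP] := compl_idem_orth.
by case: x; case: y; rewrite ?PP ?compl_idem_sq ?PQ ?QP.
Qed.

Lemma sign_proj_index (i j : 'I_4) :
  (if (2 <= i)%N (+) (2 <= j)%N == odd i (+) odd j then
     (if (2 <= i)%N (+) (2 <= j)%N then Q else P) else 0) =
  if i == j then P else if i == tau j then Q else 0.
Proof. by case: i => -[|[|[|[|?]]]] ? //; case: j => -[|[|[|[|?]]]] ?. Qed.

Definition rep_b (j : 'I_4) : A := (-1) ^+ (2 <= j)%N * (P - Q).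
Definition rep_c (j : 'I_4) : A := (-1) ^+ odd j * (P - Q).

Lemma rep_rels j : H_rels (rep_b j) (rep_c j) N.
Proof.
have [ND DN] := nil_invol.
rewrite /H_rels /rep_b /rep_c !mulr_sign; split; last split.
all: case: (2 <= j)%N; case: (odd j).
all: by rewrite ?mulrN ?mulNr ?invol_sq ?ND ?DN ?nil_sq ?opprK.
Qed.

Lemma rep_e_idem (h4 : (4%:R : k) != 0) j l :
  e_idem (rep_b j) (rep_c j) l =
  if l == j then P else if l == tau j then Q else 0.
Proof.
rewrite e_idemE /rep_b /rep_c !mulrA -!signr_addb !one_add_signD.
rewrite mulrnAl mulrnAr -mulrnA sign_proj_mul sign_proj_index.
by rewrite -scaler_nat scalerA mulVf // scale1r.
Qed.

End Representation.

Lemma generator_images (k : fieldType) (H : algType k) (b c z : H)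
    (univ : H_universal b c z) (h4 : (4%:R : k) != 0)
    (A : algType k) (P Q N : A) (PQ1 : P + Q = 1) (PP : P * P = P)
    (NP : N * P = 0) (PN : P * N = N) (i j : 'I_4)
    (hij : i != j) (hitj : i != tau j) :
  let e := e_idem b c in
  exists f : H -> A,
    [/\ {morph f : x y / x + y}, {morph f : x y / x * y},
        f (e i + e (tau i)) = 0, f (z + e i + e (tau i)) = N &
        f (z * e j + e i + e (tau i)) = 0 /\
        f (z * e (tau j) + e i + e (tau i)) = N].
Proof.
move=> e.
have [f [fD fZ fM f1 [fb fc fz]]] := univ _ _ _ _ (rep_rels PQ1 PP NP PN j).
have fe l : f (e l) = if l == j then P else if l == tau j then Q else 0.
  by rewrite /e e_idem_morph // fb fc rep_e_idem.
have fei : f (e i) = 0 by rewrite fe (negbTE hij) (negbTE hitj).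
have feti : f (e (tau i)) = 0.
  by rewrite fe tau_eq (negbTE hitj) (inj_eq rev_ord_inj) (negbTE hij).
exists f; split=> //; rewrite ?fD ?fM ?fz fei feti ?addr0 //.
by rewrite !fe eqxx (negbTE (tau_neq j)) eqxx NP (nil_compl PQ1 NP).
Qed.

Lemma delta_mx_idem_nil (k : fieldType) :
  exists P Q N : 'M[k]_2,
    [/\ P + Q = 1, P * P = P, N * P = 0, P * N = N & N != 0].
Proof.
exists (delta_mx 0 0), (1 - delta_mx 0 0), (delta_mx 0 1).
split; rewrite -?mulmxE ?mul_delta_mx ?mul_delta_mx_0 //; first exact: subrKC.
by apply/eqP => /matrixP/(_ 0 1)/eqP; rewrite !mxE /= oner_eq0.
Qed.

Theorem lemma5p7 (k : closedFieldType) (Hchar : [pchar k] =i pred0)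
  (H : algType k) (b c z : H) (HH : is_H b c z)
  (i kk : 'I_4) (hki : kk != i) (hkt : kk != tau i) :
  let e := e_idem b c in
  let I1 := ideal_gen (e i + e (tau i)) in
  let I2 := ideal_gen (z + e i + e (tau i)) in
  let I3 := ideal_gen (z * e kk + e i + e (tau i)) in
  let I4 := ideal_gen (z * e (tau kk) + e i + e (tau i)) in
  [/\ I1 <> I2, I1 <> I3, I1 <> I4 & [/\ I2 <> I3, I2 <> I4 & I3 <> I4]].
Proof.
move=> e I1 I2 I3 I4; subst e I1 I2 I3 I4.
have [_ _ univ] := HH.
have h4 : (4%:R : k) != 0 by move/pcharf0P: Hchar => ->.
have [P [Q [N [PQ1 PP NP PN Nnz]]]] := delta_mx_idem_nil k.
have hik : i != kk by rewrite eq_sym.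
have hitk : i != tau kk by rewrite eq_sym tau_eq.
have hittk : i != tau (tau kk) by rewrite tauK.
have [f [fD fM f1 f2 [f3 f4]]] := generator_images univ h4 PQ1 PP NP PN hik hitk.
have [g [gD gM g1 g2 [g4 g3]]] :=
  generator_images univ h4 PQ1 PP NP PN hitk hittk.
rewrite tauK in g3.
split; last split.
- by apply: (ideal_gen_neq fD fM f1); rewrite f2.
- by apply: (ideal_gen_neq gD gM g1); rewrite g3.
- by apply: (ideal_gen_neq fD fM f1); rewrite f4.
- by move/esym; apply: (ideal_gen_neq fD fM f3); rewrite f2.
- by move/esym; apply: (ideal_gen_neq gD gM g4); rewrite g2.
- by apply: (ideal_gen_neq fD fM f3); rewrite f4.
Qed.
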